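(* Let $K$ be a field of characteristic different from $2$ and $3$, let $L$ be a perfect Lie algebra ($[L,L]=L$), let $A$ be an associative commutative algebra with unit, assume at least one of $L$, $A$ is finite-dimensional, and let $D$ be a Lie subalgebra of $\operatorname{Der}(A)$. Consider the Lie algebra $(L\otimes A)\oplus D$ with brackets $[x\otimes a,y\otimes b]=[x,y]\otimes ab$, $[d,x\otimes a]=x\otimes d(a)$ and the bracket of $D$ ($x,y\in L$, $a,b\in A$, $d\in D$). Then $$Z^2_{comm}((L\otimes A)\oplus D)\cong Z^2_{comm}(L)\otimes X\ \oplus\ C(L)\otimes Y\ \oplus\ Z^2_{comm}(D),$$ where $X=\{\chi\in A^*:\chi(d(a)b-ad(b))=0\text{ for all } a,b\in A,\ d\in D\}$ and $Y=\{\beta\in HC^1(A):\beta(d(a),b)-\beta(a,d(b))=0\text{ for all } a,b\in A,\ d\in D\}$.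
   Context: $Z^2_{comm}(\mathfrak L)$ is the space of symmetric bilinear forms $\varphi$ on a Lie algebra $\mathfrak L$ with $\varphi([x,y],z)+\varphi([z,x],y)+\varphi([y,z],x)=0$ for all $x,y,z$. $C(L)$ is the space of skew-symmetric bilinear forms $\psi$ on $L$ with $\psi([x,y],z)=\psi([z,x],y)$ for all $x,y,z\in L$. $HC^1(A)$ is the space of skew-symmetric bilinear forms $\alpha$ on $A$ with $\alpha(ab,c)+\alpha(ca,b)+\alpha(bc,a)=0$ for all $a,b,c\in A$. *)

From HB Require Import structures.
From mathcomp Require Import all_boot all_order all_algebra.
From mathcomp Require Import boolp functions.
Set Implicit Arguments. Unset Strict Implicit. Unset Printing Implicit Defensive.
Import GRing.Theory.
Local Open Scope ring_scope.

Section Defs.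
Variable K : fieldType.

Definition lin_on (U W : lmodType K) (S : U -> Prop) (f : U -> W) :=
  forall k u u', S u -> S u' -> f (k *: u + u') = k *: f u + f u'.

Definition bilin_on (U V W : lmodType K) (S1 : U -> Prop) (S2 : V -> Prop)
    (f : U -> V -> W) :=
  (forall k u u' v, S1 u -> S1 u' -> S2 v -> f (k *: u + u') v = k *: f u v + f u' v) /\
  (forall k u v v', S1 u -> S2 v -> S2 v' -> f u (k *: v + v') = k *: f u v + f u v').

Definition bilin (U V W : lmodType K) (f : U -> V -> W) :=
  bilin_on (fun _ => True) (fun _ => True) f.

Definition is_lie (L : lmodType K) (br : L -> L -> L) :=
  [/\ bilin br, (forall x, br x x = 0) &
      (forall x y z, br x (br y z) + br y (br z x) + br z (br x y) = 0)].

Definition perfect (L : lmodType K) (br : L -> L -> L) :=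
  forall x, exists n (u v : 'I_n -> L), x = \sum_(i < n) br (u i) (v i).

Definition findim (V : lmodType K) :=
  exists n (e : 'I_n -> V), forall v, exists c : 'I_n -> K, v = \sum_(i < n) c i *: e i.

(* (T, tau) is a tensor product of the subspaces S1 of U and S2 of V
   (universal property; tau(S1 x S2) spans T). *)
Definition is_tensor (U V T : lmodType K) (S1 : U -> Prop) (S2 : V -> Prop)
    (tau : U -> V -> T) :=
  [/\ bilin_on S1 S2 tau,
      (forall t, exists n (u : 'I_n -> U) (v : 'I_n -> V),
          (forall i, S1 (u i) /\ S2 (v i)) /\ t = \sum_(i < n) tau (u i) (v i)) &
      (forall (W : lmodType K) (beta : U -> V -> W), bilin_on S1 S2 beta ->
          exists f : T -> W, lin_on (fun _ => True) f /\
            forall u v, S1 u -> S2 v -> f (tau u v) = beta u v)].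

Definition Z2comm (g : lmodType K) (br : g -> g -> g) (phi : g -> g -> K^o) :=
  [/\ bilin phi, (forall x y, phi x y = phi y x) &
      (forall x y z, phi (br x y) z + phi (br z x) y + phi (br y z) x = 0)].

Definition Cform (L : lmodType K) (br : L -> L -> L) (psi : L -> L -> K^o) :=
  [/\ bilin psi, (forall x y, psi x y = - psi y x) &
      (forall x y z, psi (br x y) z = psi (br z x) y)].

Definition HC1 (A : comAlgType K) (alpha : A -> A -> K^o) :=
  [/\ bilin alpha, (forall a b, alpha a b = - alpha b a) &
      (forall a b c, alpha (a * b) c + alpha (c * a) b + alpha (b * c) a = 0)].

Definition is_derivation (A : comAlgType K) (d : A -> A) :=
  lin_on (fun _ => True) d /\ (forall a b, d (a * b) = d a * b + a * d b).

(* D (with bracket brD) is a Lie subalgebra of Der(A), given through the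
   injective Lie-algebra map rho : D -> Der(A) (inclusion). *)
Definition der_subalg (A : comAlgType K) (D : lmodType K) (brD : D -> D -> D)
    (rho : D -> A -> A) :=
  [/\ lin_on (fun _ => True) rho, injective rho,
      (forall d, is_derivation (rho d)) &
      (forall d e a, rho (brD d e) a = rho d (rho e a) - rho e (rho d a))].

Definition Xset (A : comAlgType K) (D : lmodType K) (rho : D -> A -> A)
    (chi : A -> K^o) :=
  lin_on (fun _ => True) chi /\
  (forall a b d, chi (rho d a * b - a * rho d b) = 0).

Definition Yset (A : comAlgType K) (D : lmodType K) (rho : D -> A -> A)
    (beta : A -> A -> K^o) :=
  HC1 beta /\ (forall a b d, beta (rho d a) b - beta a (rho d b) = 0).

Definition semidirect_bracket (L : lmodType K) (brL : L -> L -> L)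
    (A : comAlgType K) (D : lmodType K) (brD : D -> D -> D) (rho : D -> A -> A)
    (T : lmodType K) (tau : L -> A -> T)
    (br : (T * D)%type -> (T * D)%type -> (T * D)%type) :=
  [/\ bilin br,
      (forall x y a b, br (tau x a, 0) (tau y b, 0) = (tau (brL x y) (a * b), 0)),
      (forall d x a, br (0, d) (tau x a, 0) = (tau x (rho d a), 0)),
      (forall d x a, br (tau x a, 0) (0, d) = (- tau x (rho d a), 0)) &
      (forall d e, br (0, d) (0, e) = (0, brD d e))].

Definition lin_iso_on (U W : lmodType K) (S : U -> Prop) (S' : W -> Prop)
    (f : U -> W) :=
  [/\ lin_on S f,
      (forall u u', S u -> S u' -> f u = f u' -> u = u') &
      (forall w, S' w <-> exists u, S u /\ f u = w)].

End Defs.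

(* A form [psi] in [Z^2_comm((L (x) A) + D)] has three blocks. Perfectness of [L]
   and [char K <> 2] kill the mixed [(L (x) A) x D] block (through [C(L) = 0], which
   also makes the [C(L) (x) Y] summand vanish) and force
   [psi(x (x) a, y (x) b) = phi_(ab)(x, y)] for a linear map [c |-> phi_c] from [A]
   to [Z^2_comm(L)] vanishing on the elements [d(a) b - a d(b)]. Finite
   dimensionality of [L] or [A] makes this map of finite rank, so it is a finite sum
   of maps [chi(c) phi] with [chi] in [X]: an element of [Z^2_comm(L) (x) X]. The
   [D x D] block is an arbitrary element of [Z^2_comm(D)]. *)

From HB Require Import structures.
From mathcomp Require Import all_boot all_order all_algebra.
From mathcomp Require Import boolp functions.
From mathcomp Require Import ring.
Set Implicit Arguments. Unset Strict Implicit. Unset Printing Implicit Defensive.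
Import GRing.Theory.
Local Open Scope ring_scope.

Notation lin := (lin_on (fun _ => True)).

Section LinearMaps.
Variable K : fieldType.
Implicit Types U V W : lmodType K.

Lemma linD U W (f : U -> W) : lin f -> forall u v, f (u + v) = f u + f v.
Proof. by move=> Hf u v; have := Hf 1 u v I I; rewrite !scale1r. Qed.

Lemma lin0 U W (f : U -> W) : lin f -> f 0 = 0.
Proof. by move=> Hf; apply: (addrI (f 0)); rewrite -(linD Hf) !addr0. Qed.

Lemma linZ U W (f : U -> W) : lin f -> forall k u, f (k *: u) = k *: f u.
Proof. by move=> Hf k u; have := Hf k u 0 I I; rewrite !addr0 (lin0 Hf) addr0. Qed.

Lemma linN U W (f : U -> W) : lin f -> forall u, f (- u) = - f u.
Proof. by move=> Hf u; rewrite -scaleN1r (linZ Hf) scaleN1r. Qed.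

Lemma linB U W (f : U -> W) : lin f -> forall u v, f (u - v) = f u - f v.
Proof. by move=> Hf u v; rewrite (linD Hf) (linN Hf). Qed.

Lemma lin_combE U W (f : U -> W) : lin f ->
  forall k u u', f (k *: u + u') = k *: f u + f u'.
Proof. by move=> Hf k u u'; apply: Hf. Qed.

Lemma lin_sum U W (f : U -> W) n (g : 'I_n -> U) :
  lin f -> f (\sum_(i < n) g i) = \sum_(i < n) f (g i).
Proof. by move=> Hf; elim/big_rec2: _ => [|i y1 y2 _ <-]; [exact: lin0 | exact: linD]. Qed.

Lemma lin_cst0 U W : lin (fun _ : U => 0 : W).
Proof. by move=> *; rewrite scaler0 addr0. Qed.

Lemma lin_comb U W (f g : U -> W) k : lin f -> lin g -> lin (k *: f + g).
Proof.
move=> Hf Hg c u v _ _; rewrite !addrfctE !scalrfctE /=.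
rewrite (linD Hf) (linD Hg) (linZ Hf) (linZ Hg).
by rewrite !scalerDr !scalerA [c * k]mulrC addrACA.
Qed.

Lemma comb_app2 U V W (f g : U -> V -> W) k u v :
  (k *: f + g) u v = k *: f u v + g u v.
Proof. by []. Qed.

Lemma bilin_linl U V W (f : U -> V -> W) : bilin f -> forall v, lin (f^~ v).
Proof. by case=> Hl _ v k u u' _ _; apply: Hl. Qed.

Lemma bilin_linr U V W (f : U -> V -> W) : bilin f -> forall u, lin (f u).
Proof. by case=> _ Hr u k v v' _ _; apply: Hr. Qed.

Lemma bilin_lin U V W (f : U -> V -> W) : bilin f -> lin f.
Proof.
move=> Hf k u u' _ _; apply/funext => v.
by rewrite addrfctE scalrfctE; apply: (bilin_linl Hf).
Qed.

Lemma bilin_cst0 U V W : bilin (fun (_ : U) (_ : V) => 0 : W).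
Proof. by split=> *; rewrite scaler0 addr0. Qed.

Lemma bilin_comb U V W (f g : U -> V -> W) k :
  bilin f -> bilin g -> bilin (k *: f + g).
Proof.
move=> Hf Hg; split=> c u u' v _ _ _.
  have Hc := lin_comb k (bilin_lin Hf) (bilin_lin Hg).
  by have /(congr1 (fun h => h v)) := Hc c u u' I I.
have Hc := lin_comb k (bilin_linr Hf u) (bilin_linr Hg u).
exact: (Hc c u' v I I).
Qed.

Lemma bilin_swap U W (f : U -> U -> W) : bilin f -> bilin (fun u v => f v u).
Proof. by case=> Hl Hr; split=> k u u' v _ _ _; [apply: Hr | apply: Hl]. Qed.

Lemma bilin_eq_span U W n (e : 'I_n -> U) (f g : U -> U -> W) :
  (forall u, exists c : 'I_n -> K, u = \sum_(i < n) c i *: e i) -> bilin f -> bilin g ->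
  (forall i j, f (e i) (e j) = g (e i) (e j)) -> f = g.
Proof.
move=> espan Hf Hg E; apply/funext => u; apply/funext => v.
have [[c ->] [c' ->]] := (espan u, espan v).
rewrite (lin_sum _ (bilin_linl Hf _)) (lin_sum _ (bilin_linl Hg _)); apply: eq_bigr => i _.
rewrite (linZ (bilin_linl Hf _)) (linZ (bilin_linl Hg _)); congr (_ *: _).
rewrite (lin_sum _ (bilin_linr Hf _)) (lin_sum _ (bilin_linr Hg _)); apply: eq_bigr => j _.
by rewrite (linZ (bilin_linr Hf _)) (linZ (bilin_linr Hg _)) E.
Qed.

Definition subspace V (P : V -> Prop) :=
  P 0 /\ forall k u v, P u -> P v -> P (k *: u + v).

Lemma subspaceZ V (P : V -> Prop) : subspace P -> forall k u, P u -> P (k *: u).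
Proof. by case=> P0 PC k u Pu; have := PC k u 0 Pu P0; rewrite addr0. Qed.

Lemma subspace_sum V (P : V -> Prop) n (f : 'I_n -> V) :
  subspace P -> (forall i, P (f i)) -> P (\sum_(i < n) f i).
Proof.
move=> [P0 PC] Pf; elim/big_ind: _ => // u v Pu Pv.
by have := PC 1 u v Pu Pv; rewrite scale1r.
Qed.

End LinearMaps.

Section TensorProduct.
Variables (K : fieldType) (U V T : lmodType K).
Variables (S1 : U -> Prop) (S2 : V -> Prop) (tau : U -> V -> T).
Hypothesis htau : is_tensor S1 S2 tau.

Lemma tensor_ind (P : T -> Prop) : P 0 -> (forall t t', P t -> P t' -> P (t + t')) ->
  (forall u v, S1 u -> S2 v -> P (tau u v)) -> forall t, P t.
Proof.
move=> P0 PD Ptau t; case: htau => _ /(_ t) [n [u [v [Suv ->]]]] _.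
by elim/big_ind: _ => // i _; case: (Suv i); apply: Ptau.
Qed.

Lemma lin_eq_tensor (W : lmodType K) (f g : T -> W) : lin f -> lin g ->
  (forall u v, S1 u -> S2 v -> f (tau u v) = g (tau u v)) -> f = g.
Proof.
move=> Hf Hg Hfg; apply/funext; elim/tensor_ind => [|t t' Ht Ht'|]; last exact: Hfg.
  by rewrite (lin0 Hf) (lin0 Hg).
by rewrite (linD Hf) (linD Hg) Ht Ht'.
Qed.

Lemma tensor0l v : S1 0 -> S2 v -> tau 0 v = 0.
Proof.
move=> S10 S2v; case: htau => [[Hl _] _ _].
have := Hl 1 0 0 v S10 S10 S2v; rewrite !scale1r addr0 => e.
by apply: (addrI (tau 0 v)); rewrite addr0 -e.
Qed.

Lemma tensor0r u : S1 u -> S2 0 -> tau u 0 = 0.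
Proof.
move=> S1u S20; case: htau => [[_ Hr] _ _].
have := Hr 1 u 0 0 S1u S20 S20; rewrite !scale1r addr0 => e.
by apply: (addrI (tau u 0)); rewrite addr0 -e.
Qed.

Hypotheses (hS1 : subspace S1) (hS2 : subspace S2).

Lemma tensor_suml n (c : 'I_n -> K) (u : 'I_n -> U) v :
  (forall i, S1 (u i)) -> S2 v ->
  tau (\sum_(i < n) c i *: u i) v = \sum_(i < n) c i *: tau (u i) v.
Proof.
move=> Su Sv; case: htau => [[Hl _] _ _].
pose P y1 y2 := S1 y1 /\ tau y1 v = y2.
suff [] : P (\sum_(i < n) c i *: u i) (\sum_(i < n) c i *: tau (u i) v) by [].
apply: big_rec2 => [|i y1 y2 _ [Sy1 <-]]; first by split; [case: hS1 | apply: tensor0l; case: hS1].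
by split; [case: hS1 => _; apply | apply: Hl].
Qed.

Lemma tensor_sumr n (c : 'I_n -> K) u (v : 'I_n -> V) :
  S1 u -> (forall i, S2 (v i)) ->
  tau u (\sum_(i < n) c i *: v i) = \sum_(i < n) c i *: tau u (v i).
Proof.
move=> Su Sv; case: htau => [[_ Hr] _ _].
pose P y1 y2 := S2 y1 /\ tau u y1 = y2.
suff [] : P (\sum_(i < n) c i *: v i) (\sum_(i < n) c i *: tau u (v i)) by [].
apply: big_rec2 => [|i y1 y2 _ [Sy1 <-]]; first by split; [case: hS2 | apply: tensor0r; case: hS2].
by split; [case: hS2 => _; apply | apply: Hr].
Qed.

End TensorProduct.

Section FullTensorProduct.
Variables (K : fieldType) (U V T : lmodType K) (tau : U -> V -> T).
Hypothesis htau : is_tensor (fun _ => True) (fun _ => True) tau.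

Lemma tensor_lift (W : lmodType K) (beta : U -> V -> W) : bilin beta ->
  {f : T -> W | lin f /\ forall u v, f (tau u v) = beta u v}.
Proof.
move=> Hb; apply: cid; case: htau => _ _ /(_ W beta Hb) [f [Hf Hfe]].
by exists f; split => // u v; apply: Hfe.
Qed.

Lemma bilin_eq_tensor (W : lmodType K) (B B' : T -> T -> W) : bilin B -> bilin B' ->
  (forall u v u' v', B (tau u v) (tau u' v') = B' (tau u v) (tau u' v')) -> B = B'.
Proof.
move=> HB HB' E; apply: (lin_eq_tensor htau); try exact: bilin_lin.
by move=> u v _ _; apply: (lin_eq_tensor htau); try exact: bilin_linr.
Qed.

Lemma tensor_bilin_form (F : U -> V -> U -> V -> K^o) :
  (forall u' v', bilin (fun u v => F u v u' v')) -> (forall u v, bilin (F u v)) ->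
  exists B : T -> T -> K^o, bilin B /\
    forall u v u' v', B (tau u v) (tau u' v') = F u v u' v'.
Proof.
move=> Fl Fr.
pose g u v := sval (tensor_lift (Fr u v)).
have gl u v : lin (g u v) by rewrite /g; case: tensor_lift => ? [].
have gE u v u' v' : g u v (tau u' v') = F u v u' v'.
  by rewrite /g; case: tensor_lift => ? [].
have Hg : bilin g.
  split=> k u u1 v _ _ _; apply: (lin_eq_tensor htau) => //; try exact: lin_comb;
    move=> u' v' _ _; rewrite addrfctE scalrfctE /= !gE.
  - exact: (Fl u' v').1.
  - exact: (Fl u' v').2.
have [G [GL GE]] := tensor_lift Hg.
have Gr t : lin (G t).
  elim/(tensor_ind htau): t => [|t t' Ht Ht'|u v _ _]; last by rewrite GE.
    by rewrite (lin0 GL); apply: lin_cst0.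
  by rewrite (linD GL) -[G t]scale1r; apply: lin_comb.
exists G; split; last by move=> u v u' v'; rewrite GE gE.
by split=> k t t' t1 _ _ _; [rewrite (GL k t t' I I) | apply: Gr].
Qed.

End FullTensorProduct.

Section FiniteRank.
Variable K : fieldType.

Lemma span_subspace (V : vectType K) (P : V -> Prop) (X : seq V) v : subspace P ->
  (forall x, x \in X -> P x) -> v \in <<X>>%VS -> P v.
Proof.
move=> HP PX; rewrite -[X]in_tupleE => /coord_span ->.
apply: subspace_sum => // i; apply: subspaceZ => //.
by apply: PX; apply: mem_nth; exact: ltn_ord.
Qed.

Lemma subspace_vspace (V : vectType K) (P : V -> Prop) : subspace P ->
  exists U : {vspace V}, forall v, v \in U <-> P v.
Proof.
move=> HP.
(* Grow a free family inside [P]; its length is bounded by the dimension. *)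
suff grow n (X : seq V) : (\dim {:V} - size X = n)%N -> free X ->
    (forall x, x \in X -> P x) -> exists U : {vspace V}, forall v, v \in U <-> P v.
  by apply: (grow _ [::]) => //; rewrite /free span_nil dimv0.
elim: n X => [|n IH] X Hn fX PX.
  exists <<X>>%VS => v; split; first exact: span_subspace.
  move=> Pv; apply/negPn/negP => Xv.
  have /eqnP /= fvX : free (v :: X) by rewrite free_cons Xv fX.
  have : ((size X).+1 <= \dim {:V})%N by rewrite -fvX dimvS ?subvf.
  by move/eqP: Hn; rewrite subn_eq0 => /(leq_trans _)/[apply]; rewrite ltnn.
case: (pselect (forall v, P v -> v \in <<X>>%VS)) => [XP|].
  by exists <<X>>%VS => v; split => [|/XP //]; apply: span_subspace.
move=> /existsNP [v /not_implyP [Pv Xv]].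
apply: (IH (v :: X)); first by rewrite /= subnS Hn.
  by rewrite free_cons fX andbT; apply/negP.
by move=> x; rewrite inE => /orP [/eqP ->|/PX].
Qed.

Lemma lin_section (V : vectType K) (A W : lmodType K) (s : A -> W) (h : V -> A) :
  lin s -> lin h -> (forall a, exists v, s (h v) = s a) ->
  exists sec : A -> V,
    [/\ lin sec, forall a, s (h (sec a)) = s a & forall a, s a = 0 -> sec a = 0].
Proof.
move=> Hs Hh hsurj.
(* Lifting into a complement of the kernel of [s \o h] makes the lift unique,
   hence linear. *)
have Hsh : lin (fun v => s (h v)).
  by move=> k u v _ _; rewrite (linD Hh) (linZ Hh) (linD Hs) (linZ Hs).
have [N HN] : exists N : {vspace V}, forall v, v \in N <-> s (h v) = 0.
  apply: subspace_vspace; split; first by rewrite (lin0 Hh) (lin0 Hs).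
  by move=> k u v Hu Hv; rewrite (Hsh k u v I I) Hu Hv scaler0 addr0.
have lift a : exists c, c \in (N^C)%VS /\ s (h c) = s a.
  have [v <-] := hsurj a.
  have := memvf v; rewrite -(addv_complf N) => /memv_addP [v1 Nv1 [v2 Cv2 ->]].
  by exists v2; rewrite (linD Hsh) (proj1 (HN v1) Nv1) add0r.
have lift_uniq c c' : c \in (N^C)%VS -> c' \in (N^C)%VS -> s (h c) = s (h c') -> c = c'.
  move=> Cc Cc' e; apply/eqP; rewrite -subr_eq0.
  have : c - c' \in (N :&: N^C)%VS.
    by rewrite memv_cap (memvB Cc Cc') andbT; apply/HN; rewrite (linB Hsh) e subrr.
  by rewrite capv_compl memv0.
pose sec a := sval (cid (lift a)).
have secC a : sec a \in (N^C)%VS by rewrite /sec; case: cid => ? [].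
have secE a : s (h (sec a)) = s a by rewrite /sec; case: cid => ? [].
exists sec; split => // [k a a' _ _|a sa].
  apply: lift_uniq; rewrite ?memvD ?memvZ ?secC //.
  by rewrite secE (Hsh k _ _ I I) !secE (Hs k a a' I I).
by apply: lift_uniq; rewrite ?secC ?mem0v // secE sa (lin0 Hh) (lin0 Hs).
Qed.

Definition coord_decomposition (A W : lmodType K) (s : A -> W) :=
  exists m (b : 'I_m -> A) (lam : 'I_m -> A -> K^o),
    [/\ forall k, lin (lam k), (forall a, s a = 0 -> forall k, lam k a = 0) &
        forall a, s a = \sum_(k < m) lam k a *: s (b k)].

Lemma finspan_coord_decomposition (A W : lmodType K) (s : A -> W) n (e : 'I_n -> A) :
  lin s -> (forall a, exists c : 'I_n -> K, s a = s (\sum_(i < n) c i *: e i)) ->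
  coord_decomposition s.
Proof.
move=> Hs Hspan.
pose h (c : 'rV[K]_n) := \sum_(i < n) c 0 i *: e i.
have Hh : lin h.
  move=> k c c' _ _; rewrite /h scaler_sumr -big_split; apply: eq_bigr => i _.
  by rewrite !mxE scalerDl scalerA.
have h_onto a : exists c, s (h c) = s a.
  have [c ->] := Hspan a; exists (\row_i c i).
  by congr (s _); apply: eq_bigr => i _; rewrite mxE.
have [sec [Hsec secE sec0]] := lin_section Hs Hh h_onto.
pose B := vbasis {:'rV[K]_n}.
exists (\dim {:'rV[K]_n}), (fun k => h B`_k), (fun k a => coord B k (sec a)).
split=> [k c a a' _ _ | a sa k | a] /=.
- by rewrite (Hsec c a a' I I) linearP.
- by rewrite sec0 // linear0.
rewrite -secE {1}(coord_vbasis (memvf (sec a))) (lin_sum _ Hh) (lin_sum _ Hs).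
by apply: eq_bigr => k _; rewrite (linZ Hh) (linZ Hs).
Qed.

Lemma vect_finspan (A : lmodType K) (V : vectType K) (r : A -> V) : lin r ->
  exists n (e : 'I_n -> A), forall a, exists c : 'I_n -> K,
    r a = r (\sum_(i < n) c i *: e i).
Proof.
move=> Hr.
have [R HR] : exists R : {vspace V}, forall w, w \in R <-> exists a, w = r a.
  apply: subspace_vspace; split; first by exists 0; rewrite (lin0 Hr).
  by move=> k _ _ [a ->] [b ->]; exists (k *: a + b); rewrite (Hr k a b I I).
have pre (k : 'I_(\dim R)) : exists a, (vbasis R)`_k = r a.
  by apply/HR; apply: vbasis_mem; apply: mem_nth; rewrite size_tuple.
exists (\dim R), (fun k => sval (cid (pre k))) => a.
exists (fun k => coord (vbasis R) k (r a)).
rewrite (lin_sum _ Hr) {1}(@coord_vbasis _ _ (r a) R); last by apply/HR; exists a.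
by apply: eq_bigr => k _; rewrite (linZ Hr); case: cid => /= b <-.
Qed.

Lemma vect_coord_decomposition (A : lmodType K) (V : vectType K) (r : A -> V) :
  lin r -> coord_decomposition r.
Proof.
by move=> Hr; have [n [e He]] := vect_finspan Hr; apply: finspan_coord_decomposition He.
Qed.

End FiniteRank.

Section PerfectLie.
Variable K : fieldType.
Hypothesis hK2 : (2 \notin [pchar K])%N.

Lemma addrr_eq0 (V : lmodType K) (v : V) : v + v = 0 -> v = 0.
Proof.
have two_neq0 : (2%:R : K) != 0 by move: hK2; rewrite inE /=; apply: contra => ->.
move=> v2; have v2Z : 2%:R *: v = 0 by rewrite scaler_nat mulr2n.
by rewrite -[v]scale1r -(mulVf two_neq0) -scalerA v2Z scaler0.
Qed.

Variables (L : lmodType K) (brL : L -> L -> L).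
Hypothesis hL : is_lie brL.

Lemma lie_bilin : bilin brL. Proof. by case: hL. Qed.

Lemma lie_anti x y : brL x y = - brL y x.
Proof.
case: hL => _ brxx _; apply/eqP; rewrite -addr_eq0; apply/eqP.
have := brxx (x + y).
rewrite (linD (bilin_linl lie_bilin _)) !(linD (bilin_linr lie_bilin _)) !brxx.
by rewrite add0r addr0.
Qed.

Lemma lie_jacobi x y z : brL (brL x y) z + brL (brL y z) x + brL (brL z x) y = 0.
Proof.
case: hL => _ _ /(_ x y z) J.
rewrite !(lie_anti (brL _ _)) -!opprD -[RHS]oppr0 -J; congr (- _).
by rewrite [RHS]addrC addrA.
Qed.

Hypothesis hLp : perfect brL.

Lemma perfect_lin_eq0 (W : lmodType K) (g : L -> W) : lin g ->
  (forall x y, g (brL x y) = 0) -> forall x, g x = 0.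
Proof. by move=> Hg gbr x; have [n [u [v ->]]] := hLp x; rewrite (lin_sum _ Hg) big1. Qed.

Section CformPerfect.
Variable psi : L -> L -> K^o.
Hypothesis hpsi : Cform brL psi.

Let psi_bilin : bilin psi. Proof. by case: hpsi. Qed.
Let psiNl u v : psi (- u) v = - psi u v. Proof. exact: (linN (bilin_linl psi_bilin v)). Qed.
Let psiNr u v : psi u (- v) = - psi u v. Proof. exact: (linN (bilin_linr psi_bilin u)). Qed.

Lemma Cform_brackets a b c d : psi (brL a b) (brL c d) = 0.
Proof.
have [_ psi_anti psi_cyc] := hpsi.
pose Q x y z w := psi (brL x y) (brL z w).
have anti1 x y w : psi (brL x y) w = - psi (brL y x) w by rewrite (lie_anti x y) psiNl.
have anti2 x y w : psi w (brL x y) = - psi w (brL y x) by rewrite (lie_anti x y) psiNr.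
have QJ x y z w : Q x y z w = - Q z y w x - Q w y x z.
  have brJ : brL (brL z w) x = - brL (brL w x) z - brL (brL x z) w.
    by apply/eqP; rewrite -opprD -addr_eq0 addrA lie_jacobi.
  rewrite /Q (psi_cyc x) (psi_cyc z) (psi_cyc w) brJ.
  by rewrite (linB (bilin_linl psi_bilin _)) psiNl.
have e1 : Q c b d a = - Q a d b c by rewrite /Q anti1 anti2 opprK psi_anti.
have e2 : Q d b a c = Q a c b d by rewrite /Q anti1 psi_anti opprK.
have e3 : Q b a c d = - Q a b c d by rewrite /Q anti1.
have e4 : Q c a d b = Q a c b d by rewrite /Q anti1 anti2 opprK.
have e5 : Q d a b c = - Q a d b c by rewrite /Q anti1.
have := QJ a b c d; have := QJ b a c d; rewrite e1 e2 e3 e4 e5 -/(Q a b c d).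
move: (Q a b c d) (Q a d b c) (Q a c b d) => q1 q2 q3 E2 E1.
apply: addrr_eq0; transitivity ((q1 - (- - q2 - q3)) - (- q1 - (- q3 - - q2))).
  by ring.
by rewrite -E1 -E2 !subrr.
Qed.

Lemma Cform_eq0 : psi = fun _ _ => 0.
Proof.
have psi_br_eq0 a b w : psi (brL a b) w = 0.
  move: w; apply: (perfect_lin_eq0 (bilin_linr psi_bilin _)).
  exact: Cform_brackets.
apply/funext => u; apply/funext => w; move: u.
exact: (perfect_lin_eq0 (bilin_linl psi_bilin w)).
Qed.

End CformPerfect.
End PerfectLie.

Section TensorDirectSum.
Variables (K : fieldType) (L A T D : lmodType K) (tau : L -> A -> T).
Hypothesis htau : is_tensor (fun _ => True) (fun _ => True) tau.

Definition TD_generator (X : T * D) :=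
  (exists x a, X = (tau x a, 0)) \/ (exists d, X = (0, d)).

Lemma pair_combl k (t t' : T) : (k *: t + t', 0) = k *: (t, 0) + (t', 0) :> T * D.
Proof. by rewrite -[RHS]/(k *: t + t', k *: 0 + 0) scaler0 addr0. Qed.

Lemma pair_combr k (d d' : D) : (0, k *: d + d') = k *: (0, d) + (0, d') :> T * D.
Proof. by rewrite -[RHS]/(k *: 0 + 0, k *: d + d') scaler0 addr0. Qed.

Lemma additive_eq0_generators (W : zmodType) (f : T * D -> W) :
  (forall X Y, f (X + Y) = f X + f Y) -> (forall X, TD_generator X -> f X = 0) ->
  forall X, f X = 0.
Proof.
move=> fD fgen; have f0 : f 0 = 0 by apply: (addrI (f 0)); rewrite -fD !addr0.
case=> t d; have -> : (t, d) = (t, 0) + (0, d) :> T * D.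
  by rewrite -[RHS]/(t + 0, 0 + d) addr0 add0r.
rewrite fD (fgen (0, d)) ?addr0; last by right; exists d.
elim/(tensor_ind htau): t => [//|t t' Ht Ht'|x a _ _]; last by apply: fgen; left; exists x, a.
have -> : (t + t', 0) = (t, 0) + (t', 0) :> T * D.
  by rewrite -[RHS]/(t + t', 0 + 0) addr0.
by rewrite fD Ht Ht' addr0.
Qed.

Lemma bilin_eq_generators (B B' : T * D -> T * D -> K^o) : bilin B -> bilin B' ->
  (forall X Y, TD_generator X -> TD_generator Y -> B X Y = B' X Y) -> B = B'.
Proof.
move=> HB HB' E; apply/funext => X; apply/funext => Y; apply/eqP; rewrite -subr_eq0.
apply/eqP; move: X; apply: (additive_eq0_generators (f := fun X => B X Y - B' X Y)).
  move=> X1 X2; rewrite (linD (bilin_linl HB Y)) (linD (bilin_linl HB' Y)).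
  by rewrite opprD addrACA.
move=> X gX; move: Y; apply: (additive_eq0_generators (f := fun Y => B X Y - B' X Y)).
  move=> Y1 Y2; rewrite (linD (bilin_linr HB X)) (linD (bilin_linr HB' X)).
  by rewrite opprD addrACA.
by move=> Y gY; rewrite E // subrr.
Qed.

Variable br : T * D -> T * D -> T * D.
Hypothesis hbr : bilin br.

Definition cyc_sum (Psi : T * D -> T * D -> K^o) X Y Z :=
  Psi (br X Y) Z + Psi (br Z X) Y + Psi (br Y Z) X.

Lemma cyc_sum_rot Psi X Y Z : cyc_sum Psi X Y Z = cyc_sum Psi Y Z X.
Proof. by rewrite /cyc_sum addrC addrA. Qed.

Lemma cyc_sumDl Psi : bilin Psi -> forall X1 X2 Y Z,
  cyc_sum Psi (X1 + X2) Y Z = cyc_sum Psi X1 Y Z + cyc_sum Psi X2 Y Z.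
Proof.
move=> HP X1 X2 Y Z; rewrite /cyc_sum (linD (bilin_linl hbr Y)).
rewrite (linD (bilin_linr hbr Z)) (linD (bilin_linl HP _)) (linD (bilin_linl HP _)).
by rewrite (linD (bilin_linr HP _)); ring.
Qed.

Lemma cyc_sum_eq0_generators Psi : bilin Psi ->
  (forall X Y Z, TD_generator X -> TD_generator Y -> TD_generator Z ->
     cyc_sum Psi X Y Z = 0) ->
  forall X Y Z, cyc_sum Psi X Y Z = 0.
Proof.
move=> HP E X Y Z; move: X; apply: (additive_eq0_generators (f := cyc_sum Psi ^~ Y ^~ Z)).
  by move=> *; apply: cyc_sumDl.
move=> X gX; rewrite cyc_sum_rot; move: Y.
apply: (additive_eq0_generators (f := cyc_sum Psi ^~ Z ^~ X)).
  by move=> *; apply: cyc_sumDl.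
move=> Y gY; rewrite cyc_sum_rot; move: Z.
apply: (additive_eq0_generators (f := cyc_sum Psi ^~ X ^~ Y)).
  by move=> *; apply: cyc_sumDl.
by move=> Z gZ; rewrite cyc_sum_rot; apply: E.
Qed.

End TensorDirectSum.

Section FormSpaces.
Variable K : fieldType.

Lemma scale_regularE (k x : K) : k *: (x : K^o) = k * x. Proof. by []. Qed.

Lemma Z2comm_subspace (g : lmodType K) (brg : g -> g -> g) : subspace (Z2comm brg).
Proof.
split; first by split; [exact: bilin_cst0 | by [] | by move=> *; rewrite !addr0].
move=> k u v [Hu u_sym u_cyc] [Hv v_sym v_cyc]; split; first exact: bilin_comb.
  by move=> x y; rewrite !addrfctE !scalrfctE /= u_sym v_sym.
move=> x y z; rewrite !addrfctE !scalrfctE /= !scale_regularE.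
transitivity (k * (u (brg x y) z + u (brg z x) y + u (brg y z) x) +
  (v (brg x y) z + v (brg z x) y + v (brg y z) x)); first by ring.
by rewrite u_cyc v_cyc mulr0 addr0.
Qed.

Lemma Xset_subspace (A : comAlgType K) (D : lmodType K) (rho : D -> A -> A) :
  subspace (Xset rho).
Proof.
split; first by split; [exact: lin_cst0 | by []].
move=> k u v [Hu u_inv] [Hv v_inv]; split; first exact: lin_comb.
by move=> a b d; rewrite addrfctE scalrfctE /= u_inv v_inv scaler0 addr0.
Qed.

End FormSpaces.

Section Semidirect.
Variable K : fieldType.
Hypothesis hK2 : (2 \notin [pchar K])%N.
Variables (L : lmodType K) (brL : L -> L -> L).
Hypotheses (hL : is_lie brL) (hLp : perfect brL).
Variables (A : comAlgType K) (D : lmodType K) (brD : D -> D -> D) (rho : D -> A -> A).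
Hypothesis hD : der_subalg brD rho.
Variables (T : lmodType K) (tau : L -> A -> T).
Hypothesis htau : is_tensor (fun _ => True) (fun _ => True) tau.
Variable br : T * D -> T * D -> T * D.
Hypothesis hbr : semidirect_bracket brL brD rho tau br.

Let tau_bilin : bilin tau. Proof. by case: htau. Qed.
Let br_bilin : bilin br. Proof. by case: hbr. Qed.
Let brTT x y a b : br (tau x a, 0) (tau y b, 0) = (tau (brL x y) (a * b), 0).
Proof. by case: hbr. Qed.
Let brDT d x a : br (0, d) (tau x a, 0) = (tau x (rho d a), 0).
Proof. by case: hbr. Qed.
Let brTD d x a : br (tau x a, 0) (0, d) = (- tau x (rho d a), 0).
Proof. by case: hbr. Qed.
Let brDD d e : br (0, d) (0, e) = (0, brD d e).
Proof. by case: hbr. Qed.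

(* [B] is the [(L (x) A)]-block of a form in [Z^2_comm((L (x) A) + D)] whose mixed
   [(L (x) A) x D]-block vanishes. *)
Definition T_cocycle (B : T -> T -> K^o) :=
  [/\ bilin B, (forall t t', B t t' = B t' t),
      (forall x y z a b c, B (tau (brL x y) (a * b)) (tau z c) +
         B (tau (brL z x) (c * a)) (tau y b) + B (tau (brL y z) (b * c)) (tau x a) = 0) &
      (forall d x y a b, B (tau x (rho d a)) (tau y b) = B (tau x a) (tau y (rho d b)))].

Lemma T_cocycle0 : T_cocycle (fun _ _ => 0).
Proof. by split=> //; [exact: bilin_cst0 | move=> *; rewrite !addr0]. Qed.

Lemma T_cocycleD B B' : T_cocycle B -> T_cocycle B' -> T_cocycle (B + B').
Proof.
move=> [HB B_sym B_cyc B_inv] [HB' B'_sym B'_cyc B'_inv]; split.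
- by rewrite -[B]scale1r; apply: bilin_comb.
- by move=> t t'; rewrite !addrfctE /= B_sym B'_sym.
- move=> x y z a b c; rewrite !addrfctE /= -[RHS]addr0.
  by rewrite -{1}(B_cyc x y z a b c) -(B'_cyc x y z a b c); ring.
- by move=> d x y a b; rewrite !addrfctE /= B_inv B'_inv.
Qed.

Definition ext_form (B : T -> T -> K^o) (q : D -> D -> K^o) : T * D -> T * D -> K^o :=
  fun X Y => B X.1 Y.1 + q X.2 Y.2.

Lemma ext_form_Z2comm B q : T_cocycle B -> Z2comm brD q -> Z2comm br (ext_form B q).
Proof.
move=> [HB B_sym B_cyc B_inv] [Hq q_sym q_cyc].
have [[B1 B2] [q1 q2]] := (HB, Hq).
have HE : bilin (ext_form B q).
  split=> k X X' Y _ _ _; rewrite /ext_form /=.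
    by rewrite (B1 k _ _ _ I I I) (q1 k _ _ _ I I I) !scale_regularE; ring.
  by rewrite (B2 k _ _ _ I I I) (q2 k _ _ _ I I I) !scale_regularE; ring.
have B0l t : B 0 t = 0 by apply: (lin0 (bilin_linl HB t)).
have B0r t : B t 0 = 0 by apply: (lin0 (bilin_linr HB t)).
have q0l e : q 0 e = 0 by apply: (lin0 (bilin_linl Hq e)).
have q0r e : q e 0 = 0 by apply: (lin0 (bilin_linr Hq e)).
have cTTT x y z a b c : cyc_sum br (ext_form B q) (tau x a, 0) (tau y b, 0) (tau z c, 0) = 0.
  by rewrite /cyc_sum /ext_form !brTT /= !q0l !addr0 B_cyc.
have cTTD x y a b d : cyc_sum br (ext_form B q) (tau x a, 0) (tau y b, 0) (0, d) = 0.
  rewrite /cyc_sum /ext_form brTT brDT brTD /= !q0l B0r !addr0 add0r.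
  by rewrite (linN (bilin_linl HB _)) (B_sym (tau y _)) B_inv subrr.
have cTDD x a d e : cyc_sum br (ext_form B q) (tau x a, 0) (0, d) (0, e) = 0.
  by rewrite /cyc_sum /ext_form brTD brDT brDD /= !q0l q0r !B0r B0l !addr0.
have cDDD d e f : cyc_sum br (ext_form B q) (0, d) (0, e) (0, f) = 0.
  by rewrite /cyc_sum /ext_form !brDD /= !B0l !add0r q_cyc.
split=> //; first by move=> X Y; rewrite /ext_form B_sym q_sym.
apply: (cyc_sum_eq0_generators htau br_bilin HE) => X Y Z.
have rot := cyc_sum_rot br (ext_form B q).
move=> [[x [a ->]]|[d ->]] [[y [b ->]]|[e ->]] [[z [c ->]]|[f ->]].
- exact: cTTT.
- exact: cTTD.
- by rewrite -rot cTTD.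
- exact: cTDD.
- by rewrite rot cTTD.
- by rewrite rot cTDD.
- by rewrite -rot cTDD.
- exact: cDDD.
Qed.

Variables (T1 : lmodType K) (tau1 : (L -> L -> K^o) -> (A -> K^o) -> T1).
Hypothesis htau1 : is_tensor (Z2comm brL) (Xset rho) tau1.

(* The form on [L (x) A] induced by [phi (x) chi]; junk [0] unless [phi] is
   bilinear and [chi] linear. *)
Definition prod_form (phi : L -> L -> K^o) (chi : A -> K^o) : T -> T -> K^o :=
  if pselect (exists B : T -> T -> K^o, bilin B /\
     forall x a y b, B (tau x a) (tau y b) = phi x y * chi (a * b))
  is left e then sval (cid e) else fun _ _ => 0.

Lemma prod_formE phi chi : bilin phi -> lin chi ->
  bilin (prod_form phi chi) /\
  forall x a y b, prod_form phi chi (tau x a) (tau y b) = phi x y * chi (a * b).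
Proof.
move=> [phil phir] Hchi.
suff ex : exists B : T -> T -> K^o, bilin B /\
    forall x a y b, B (tau x a) (tau y b) = phi x y * chi (a * b).
  by rewrite /prod_form; case: pselect => [e|/(_ ex)//]; case: cid.
apply: (tensor_bilin_form htau) => [y b|x a]; split=> k u u' v _ _ _ /=.
- by rewrite (phil k u u' y I I I) !scale_regularE; ring.
- by rewrite mulrDl -scalerAl (Hchi k _ _ I I) !scale_regularE; ring.
- by rewrite (phir k x u u' I I I) !scale_regularE; ring.
- by rewrite mulrDr -scalerAr (Hchi k _ _ I I) !scale_regularE; ring.
Qed.

Lemma prod_form_bilin_on : bilin_on (Z2comm brL) (Xset rho) prod_form.
Proof.
have [Z2_0 Z2_comb] := Z2comm_subspace brL; have [X0 X_comb] := Xset_subspace rho.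
split=> [k u u' v Zu Zu' Xv | k u v v' Zu Xv Xv'].
- have Zc := Z2_comb k u u' Zu Zu'.
  move: Zc Zu Zu' Xv => [Hc _ _] [Hu _ _] [Hu' _ _] [Hv _].
  apply: (bilin_eq_tensor htau).
  + exact: (prod_formE Hc Hv).1.
  + by apply: bilin_comb; [exact: (prod_formE Hu Hv).1 | exact: (prod_formE Hu' Hv).1].
  move=> x a y b; rewrite !comb_app2 !(prod_formE _ Hv).2 //.
  by rewrite comb_app2 !scale_regularE; ring.
- have Xc := X_comb k v v' Xv Xv'.
  move: Zu Xc Xv Xv' => [Hu _ _] [Hc _] [Hv _] [Hv' _].
  apply: (bilin_eq_tensor htau).
  + exact: (prod_formE Hu Hc).1.
  + by apply: bilin_comb; [exact: (prod_formE Hu Hv).1 | exact: (prod_formE Hu Hv').1].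
  move=> x a y b; rewrite !comb_app2 !(prod_formE Hu _).2 //.
  by rewrite addrfctE scalrfctE /= !scale_regularE; ring.
Qed.

Lemma T_cocycle_prod_form phi chi :
  Z2comm brL phi -> Xset rho chi -> T_cocycle (prod_form phi chi).
Proof.
move=> [Hphi phi_sym phi_cyc] [Hchi chi_inv].
have [HB BE] := prod_formE Hphi Hchi.
split=> //.
- have Bswap : prod_form phi chi = fun t t' => prod_form phi chi t' t.
    apply: (bilin_eq_tensor htau) => //; first exact: bilin_swap.
    by move=> x a y b /=; rewrite !BE phi_sym (mulrC b).
  by move=> t t'; rewrite {1}Bswap.
- move=> x y z a b c; rewrite !BE.
  have [-> ->] : c * a * b = a * b * c /\ b * c * a = a * b * c by split; ring.
  by rewrite -!mulrDl phi_cyc mul0r.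
- move=> d x y a b; rewrite !BE; congr (_ * _); apply/eqP; rewrite -subr_eq0.
  by rewrite -(linB Hchi) chi_inv.
Qed.

Lemma Z2X_form_exists : {f : T1 -> T -> T -> K^o | lin f /\
  forall phi chi, Z2comm brL phi -> Xset rho chi -> f (tau1 phi chi) = prod_form phi chi}.
Proof.
apply: cid; case: htau1 => _ _ /(_ _ prod_form prod_form_bilin_on) [f [Hf fE]].
by exists f.
Qed.

Definition Z2X_form := sval Z2X_form_exists.

Lemma Z2X_form_lin : lin Z2X_form.
Proof. exact: (proj1 (svalP Z2X_form_exists)). Qed.

Lemma Z2X_formE phi chi : Z2comm brL phi -> Xset rho chi ->
  Z2X_form (tau1 phi chi) = prod_form phi chi.
Proof. exact: (proj2 (svalP Z2X_form_exists)). Qed.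

Lemma T_cocycle_Z2X_form t : T_cocycle (Z2X_form t).
Proof.
elim/(tensor_ind htau1): t => [|t t' Ht Ht'|phi chi Zphi Xchi].
- by rewrite (lin0 Z2X_form_lin); exact: T_cocycle0.
- by rewrite (linD Z2X_form_lin); apply: T_cocycleD.
- by rewrite Z2X_formE //; apply: T_cocycle_prod_form.
Qed.

Lemma derivation1 d : rho d 1 = 0.
Proof.
case: hD => _ _ /(_ d) [_ /(_ 1 1)] + _; rewrite !mul1r mulr1 => e.
by apply: (addrI (rho d 1)); rewrite addr0 -e.
Qed.

Definition restrictD (psi : T * D -> T * D -> K^o) : D -> D -> K^o :=
  fun d e => psi (0, d) (0, e).

Section Decomposition.
Variable psi : T * D -> T * D -> K^o.
Hypothesis hpsi : Z2comm br psi.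

Let psi_bilin : bilin psi. Proof. by case: hpsi. Qed.
Let psi_sym X Y : psi X Y = psi Y X. Proof. by case: hpsi. Qed.
Let psi_cyc X Y Z : psi (br X Y) Z + psi (br Z X) Y + psi (br Y Z) X = 0.
Proof. by case: hpsi. Qed.

Let F a b x y := psi (tau x a, 0) (tau y b, 0).
Let M x a d := psi (tau x a, 0) (0, d).

Let F_linl a b y : lin (fun x => F a b x y).
Proof.
move=> k x x' _ _; rewrite /F (lin_combE (bilin_linl tau_bilin a)) pair_combl.
exact: (lin_combE (bilin_linl psi_bilin _)).
Qed.

Let F_linr a b x : lin (F a b x).
Proof.
move=> k y y' _ _; rewrite /F (lin_combE (bilin_linl tau_bilin b)) pair_combl.
exact: (lin_combE (bilin_linr psi_bilin _)).
Qed.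

Let F_lina b x y : lin (fun a => F a b x y).
Proof.
move=> k a a' _ _; rewrite /F (lin_combE (bilin_linr tau_bilin x)) pair_combl.
exact: (lin_combE (bilin_linl psi_bilin _)).
Qed.

Let M_lin a d : lin (fun x => M x a d).
Proof.
move=> k x x' _ _; rewrite /M (lin_combE (bilin_linl tau_bilin a)) pair_combl.
exact: (lin_combE (bilin_linl psi_bilin _)).
Qed.

Let F_swap a b x y : F a b x y = F b a y x. Proof. exact: psi_sym. Qed.

Let F0 b x y : F 0 b x y = 0.
Proof. by rewrite /F (lin0 (bilin_linr tau_bilin x)) (lin0 (bilin_linl psi_bilin _)). Qed.

Let F_cyc a b c x y z :
  F (a * b) c (brL x y) z + F (c * a) b (brL z x) y + F (b * c) a (brL y z) x = 0.
Proof. by rewrite /F -!brTT; apply: psi_cyc. Qed.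

Let F_der a b d x y :
  M (brL x y) (a * b) d + F (rho d a) b x y - F (rho d b) a y x = 0.
Proof.
have := psi_cyc (tau x a, 0) (tau y b, 0) (0, d); rewrite brTT brDT brTD.
have -> : (- tau y (rho d b), 0) = - (tau y (rho d b), 0) :> T * D.
  by rewrite -[RHS]/(- tau y (rho d b), - 0) oppr0.
by rewrite (linN (bilin_linl psi_bilin _)).
Qed.

(* The antisymmetric part of [F a b] lies in [C(L)], which is trivial. *)
Lemma psiTT_sym a b x y : F a b x y = F a b y x.
Proof.
pose G p q := F a b p q - F a b q p.
have G_cyc p q r : G (brL p q) r = G (brL q r) p.
  have := F_cyc a 1 b p q r; have := F_cyc b 1 a p q r.
  rewrite !mulr1 !mul1r (mulrC b a) (F_swap b a (brL p q)) (F_swap b a (brL q r)) /G.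
  by move=> e1 e2; apply/eqP; rewrite -subr_eq0 -(subrr 0) -{1}e2 -e1; apply/eqP; ring.
have CG : Cform brL G.
  split=> [|p q|p q r]; last by rewrite G_cyc.
    split=> k u u' v _ _ _; rewrite /G !(lin_combE (F_linl _ _ _)) !(lin_combE (F_linr _ _ _));
    by rewrite !scale_regularE; ring.
  by rewrite /G opprB.
have /(congr1 (fun f => f x y)) /eqP := Cform_eq0 hK2 hL hLp CG.
by rewrite /G subr_eq0 => /eqP.
Qed.

Lemma psiTD_eq0 x a d : M x a d = 0.
Proof.
have E1 x' y' : F (rho d a) 1 x' y' = - M (brL x' y') a d.
  have := F_der a 1 d x' y'; rewrite mulr1 derivation1 F0 subr0 => /eqP.
  by rewrite addrC addr_eq0 => /eqP.
have E2 x' y' : F (rho d a) 1 y' x' = M (brL x' y') a d.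
  have := F_der 1 a d x' y'; rewrite mul1r derivation1 F0 addr0 => /eqP.
  by rewrite subr_eq0 => /eqP.
move: x; apply: (perfect_lin_eq0 hLp (M_lin a d)) => x y /=.
by apply: (addrr_eq0 hK2); rewrite -{1}E2 psiTT_sym E1 addNr.
Qed.

Lemma psiTT_mul a b x y : F a b x y = F (a * b) 1 x y.
Proof.
pose G p q := F a b p q - F (a * b) 1 p q.
have G_cyc p q r : G (brL p q) r + G (brL q r) p = 0.
  have := F_cyc a 1 b p q r; have := F_cyc (a * b) 1 1 p q r.
  rewrite !mulr1 !mul1r (mulrC b a) (F_swap b a (brL q r)) (F_swap 1 (a * b) (brL q r)).
  rewrite (psiTT_sym a b p) (psiTT_sym (a * b) 1 p) /G => e1 e2.
  by rewrite -(subrr 0) -{1}e2 -e1; ring.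
have G_br p q r : G (brL p q) r = 0.
  apply: (addrr_eq0 hK2).
  transitivity ((G (brL p q) r + G (brL q r) p) - (G (brL q r) p + G (brL r p) q)
     + (G (brL r p) q + G (brL p q) r)); first by ring.
  by rewrite !G_cyc subrr addr0.
have G_lin r : lin (G^~ r).
  move=> k u u' _ _; rewrite /G !(lin_combE (F_linl _ _ _)) !scale_regularE; ring.
by apply/eqP; rewrite -subr_eq0; apply/eqP; apply: (perfect_lin_eq0 hLp (G_lin y)).
Qed.

Let psiL c : L -> L -> K^o := F c 1.

Let psiL_lin : lin psiL.
Proof.
move=> k a a' _ _; apply/funext => x; apply/funext => y.
by rewrite comb_app2 /psiL (lin_combE (F_lina _ _ _)).
Qed.

Let psiL_Z2comm c : Z2comm brL (psiL c).
Proof.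
split=> [|x y|x y z].
- by split=> k u u' v _ _ _; rewrite /psiL ?(lin_combE (F_linl _ _ _)) ?(lin_combE (F_linr _ _ _)).
- exact: psiTT_sym.
- have := F_cyc c 1 1 x y z.
  by rewrite !mulr1 !mul1r (F_swap 1 c) (psiTT_sym c 1 x).
Qed.

Let psiL_Xset a b d : psiL (rho d a * b - a * rho d b) = 0.
Proof.
suff E : psiL (rho d a * b) = psiL (a * rho d b) by rewrite (linB psiL_lin) E subrr.
apply/funext => x; apply/funext => y; rewrite /psiL -!psiTT_mul [RHS]F_swap.
by have := F_der a b d x y; rewrite psiTD_eq0 add0r => /eqP; rewrite subr_eq0 => /eqP.
Qed.

Let psiL_coord_decomposition : findim L \/ findim A -> coord_decomposition psiL.
Proof.
case=> [[n [e espan]]|[n [e espan]]]; last first.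
  by apply: (finspan_coord_decomposition psiL_lin) => a; have [c ->] := espan a; exists c.
pose r a : 'M[K]_n := \matrix_(i, j) psiL a (e i) (e j).
have r_lin : lin r.
  move=> k a a' _ _; apply/matrixP => i j.
  by rewrite !mxE (lin_combE psiL_lin) comb_app2.
have [m [f fspan]] := vect_finspan r_lin.
apply: (finspan_coord_decomposition psiL_lin (e := f)) => a.
have [c rE] := fspan a; exists c.
have [[Ha _ _] [Hf _ _]] := (psiL_Z2comm a, psiL_Z2comm (\sum_(i < m) c i *: f i)).
apply: (bilin_eq_span espan Ha Hf) => i j.
by have /matrixP/(_ i j) := rE; rewrite !mxE.
Qed.

Lemma Z2comm_restrictD : Z2comm brD (restrictD psi).
Proof.
split=> [|d e|d e f]; last by rewrite /restrictD -!brDD psi_cyc.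
  by split=> k u u' v _ _ _; rewrite /restrictD pair_combr;
    [apply: (lin_combE (bilin_linl psi_bilin _)) | apply: (lin_combE (bilin_linr psi_bilin _))].
exact: psi_sym.
Qed.

Lemma Z2comm_decomposition : findim L \/ findim A ->
  exists t1, ext_form (Z2X_form t1) (restrictD psi) = psi.
Proof.
move=> hfd; have [m [b [lam [lam_lin lam_ker psiLE]]]] := psiL_coord_decomposition hfd.
have lam_X k : Xset rho (lam k).
  by split=> // a a' d; apply: lam_ker; apply: psiL_Xset.
pose t1 := \sum_(k < m) tau1 (psiL (b k)) (lam k); exists t1.
have Z2X_0 t : Z2X_form t 0 = 0 /\ forall t', Z2X_form t t' 0 = 0.
  have [HB _ _ _] := T_cocycle_Z2X_form t.
  by split=> [|t']; [exact: (lin0 (bilin_lin HB)) | exact: (lin0 (bilin_linr HB t'))].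
apply: (bilin_eq_generators htau) => //.
  by have [] := ext_form_Z2comm (T_cocycle_Z2X_form t1) Z2comm_restrictD.
have [HD _ _] := Z2comm_restrictD.
have [rD0l rD0r] : (forall e, restrictD psi 0 e = 0) /\ (forall d, restrictD psi d 0 = 0).
  by split=> ?; [exact: (lin0 (bilin_linl HD _)) | exact: (lin0 (bilin_linr HD _))].
move=> _ _ [[x [a ->]]|[d ->]] [[y [b' ->]]|[e ->]]; rewrite /ext_form /=.
- rewrite rD0l addr0 /t1 (lin_sum _ Z2X_form_lin) !fct_sumE -/(F a b' x y) psiTT_mul.
  rewrite -/(psiL (a * b')) psiLE !fct_sumE; apply: eq_bigr => k _.
  have [[Hb _ _] [Hl _]] := (psiL_Z2comm (b k), lam_X k).
  by rewrite Z2X_formE // (prod_formE Hb Hl).2 mulrC.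
- by rewrite (Z2X_0 _).2 rD0l add0r -/(M x a e) psiTD_eq0.
- by rewrite (Z2X_0 _).1 rD0r add0r psi_sym -/(M y b' d) psiTD_eq0.
- by rewrite (Z2X_0 _).1 add0r.
Qed.

End Decomposition.

Lemma Z2X_form_sum n (u : 'I_n -> L -> L -> K^o) (v : 'I_n -> A -> K^o) x y a :
  (forall i, Z2comm brL (u i) /\ Xset rho (v i)) ->
  Z2X_form (\sum_(i < n) tau1 (u i) (v i)) (tau x a) (tau y 1) =
  \sum_(i < n) v i a * u i x y.
Proof.
move=> Zuv; rewrite (lin_sum _ Z2X_form_lin) !fct_sumE; apply: eq_bigr => i _.
have [Zu Xv] := Zuv i; have [[Hu _ _] [Hv _]] := (Zu, Xv).
by rewrite Z2X_formE // (prod_formE Hu Hv).2 mulr1 mulrC.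
Qed.

Lemma Z2X_form_inj t : Z2X_form t = 0 -> t = 0.
Proof.
case: htau1 => _ /(_ t) [n [u [v [Zuv ->]]]] _ t0.
have v_lin i : lin (v i) by case: (Zuv i) => _ [].
pose r a : 'rV[K]_n := \row_i v i a.
have r_lin : lin r.
  by move=> k a a' _ _; apply/rowP => i; rewrite !mxE (lin_combE (v_lin i)).
have [m [b [lam [lam_lin lam_ker rE]]]] := vect_coord_decomposition r_lin.
have lam_X k : Xset rho (lam k).
  split=> // a a' d; apply: lam_ker; apply/rowP => i; rewrite !mxE.
  by case: (Zuv i) => _ [_ ->].
have vE i : v i = \sum_(k < m) v i (b k) *: lam k.
  apply/funext => a; rewrite fct_sumE.
  have /rowP/(_ i) := rE a; rewrite !mxE summxE => ->.
  by apply: eq_bigr => k _; rewrite !mxE mulrC.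
have coef0 k : \sum_(i < n) v i (b k) *: u i = 0.
  apply/funext => x; apply/funext => y; rewrite !fct_sumE.
  have := congr1 (fun f => f (tau x (b k)) (tau y 1)) t0.
  by rewrite Z2X_form_sum // => <-; apply: eq_bigr.
have [Z2_sub X_sub] := (Z2comm_subspace brL, Xset_subspace rho).
transitivity (\sum_(i < n) \sum_(k < m) v i (b k) *: tau1 (u i) (lam k)).
  apply: eq_bigr => i _; rewrite {1}(vE i).
  by apply: (tensor_sumr htau1 X_sub); case: (Zuv i).
rewrite exchange_big /=; apply: big1 => k _.
rewrite -(tensor_suml htau1 Z2_sub) // ?coef0; last by move=> i; case: (Zuv i).
by apply: (tensor0l htau1); case: Z2_sub.
Qed.

Variables (T2 : lmodType K) (tau2 : (L -> L -> K^o) -> (A -> A -> K^o) -> T2).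
Hypothesis htau2 : is_tensor (Cform brL) (Yset rho) tau2.

Lemma Cform_tensor_trivial (t : T2) : t = 0.
Proof.
elim/(tensor_ind htau2): t => [//|t t' -> ->|u v Cu Yv]; first by rewrite addr0.
have u0 : u = 0 := Cform_eq0 hK2 hL hLp Cu.
by rewrite u0 in Cu *; apply: (tensor0l htau2).
Qed.

(* [T2] is trivial, so [semidirect_form] ignores its [T2] component. *)
Definition semidirect_form (p : T1 * T2 * (D -> D -> K^o)) := ext_form (Z2X_form p.1.1) p.2.

Lemma semidirect_form_lin : lin semidirect_form.
Proof.
move=> k p p' _ _; apply/funext => X; apply/funext => Y.
rewrite comb_app2 /semidirect_form /ext_form /= (lin_combE Z2X_form_lin) !comb_app2.
by rewrite !scale_regularE; ring.
Qed.

Lemma semidirect_form_inj p p' : Z2comm brD p.2 -> Z2comm brD p'.2 ->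
  semidirect_form p = semidirect_form p' -> p = p'.
Proof.
case: p p' => [[t1 t2] q] [[t1' t2'] q'] /= [Hq _ _] [Hq' _ _].
rewrite /semidirect_form /ext_form /= => E.
have q00 : q 0 0 = 0 /\ q' 0 0 = 0.
  by split; [exact: (lin0 (bilin_linl Hq _)) | exact: (lin0 (bilin_linl Hq' _))].
have Z2X_0l t t' : Z2X_form t 0 t' = 0.
  by have [HB _ _ _] := T_cocycle_Z2X_form t; rewrite (lin0 (bilin_lin HB)).
have -> : q = q'.
  apply/funext => d; apply/funext => e.
  by have /= := congr1 (fun f => f (0, d) (0, e)) E; rewrite !Z2X_0l !add0r.
have -> : t1 = t1'.
  apply/eqP; rewrite -subr_eq0; apply/eqP; apply: Z2X_form_inj.
  rewrite (linB Z2X_form_lin); apply/eqP; rewrite subr_eq0; apply/eqP.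
  apply/funext => t; apply/funext => t'.
  by have /= := congr1 (fun f => f (t, 0) (t', 0)) E; rewrite q00.1 q00.2 !addr0.
by rewrite (Cform_tensor_trivial t2) (Cform_tensor_trivial t2').
Qed.

Lemma semidirect_form_range : findim L \/ findim A -> forall psi,
  Z2comm br psi <-> exists p, Z2comm brD p.2 /\ semidirect_form p = psi.
Proof.
move=> hfd psi; split=> [Zpsi | [p [Zp <-]]]; last first.
  exact: (ext_form_Z2comm (T_cocycle_Z2X_form _)).
have [t1 E] := Z2comm_decomposition Zpsi hfd.
by exists (t1, 0, restrictD psi); split; [exact: Z2comm_restrictD | exact: E].
Qed.
End Semidirect.

Theorem lemma5p3 (K : fieldType)
  (hK2 : (2 \notin [pchar K])%N) (hK3 : (3 \notin [pchar K])%N)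
  (L : lmodType K) (brL : L -> L -> L) (hL : is_lie brL) (hLp : perfect brL)
  (A : comAlgType K) (hfd : findim L \/ findim A)
  (D : lmodType K) (brD : D -> D -> D) (rho : D -> A -> A)
  (hD : der_subalg brD rho)
  (T : lmodType K) (tau : L -> A -> T)
  (htau : is_tensor (fun _ => True) (fun _ => True) tau)
  (br : (T * D)%type -> (T * D)%type -> (T * D)%type)
  (hbr : semidirect_bracket brL brD rho tau br)
  (T1 : lmodType K) (tau1 : (L -> L -> K^o) -> (A -> K^o) -> T1)
  (htau1 : is_tensor (Z2comm brL) (Xset rho) tau1)
  (T2 : lmodType K) (tau2 : (L -> L -> K^o) -> (A -> A -> K^o) -> T2)
  (htau2 : is_tensor (Cform brL) (Yset rho) tau2) :
  exists Phi : (T1 * T2 * (D -> D -> K^o))%type -> ((T * D)%type -> (T * D)%type -> K^o),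
    lin_iso_on (fun p => Z2comm brD p.2) (Z2comm br) Phi.
Proof.
exists (semidirect_form htau htau1 (T2 := T2)); split.
- by move=> k p p' _ _; apply: semidirect_form_lin.
- exact: (semidirect_form_inj hK2 hL hLp htau2).
- exact: (semidirect_form_range hK2 hL hLp hD htau hbr htau1 T2 hfd).
Qed.
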